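(* Let $n,k,r$ be integers with $k,r\geq 2$, $n\geq 2k$ and $k<r$. Then every vertex-$k$-maximal $r$-uniform hypergraph $H$ on $n$ vertices satisfies $|E(H)|\leq \binom{n}{r}-\binom{n-k}{r}$ (which equals $\binom{n}{r}-\binom{n-k}{r}+(\frac{n}{k}-2)\binom{k}{r}$ since $\binom{k}{r}=0$).
   Context: Binomial coefficients satisfy $\binom{a}{b}=0$ when $b>a$. A hypergraph $H=(V,E)$ consists of a finite vertex set $V$ and a set $E$ of non-empty subsets of $V$ (edges); it is $r$-uniform if all edges have exactly $r$ elements. The complement $H^c$ has as edges the $r$-subsets of $V$ not in $E$. A subhypergraph is $H'=(V',E')$ with $V'\subseteq V$, $E'\subseteq E$. $H+e=(V,E\cup\{e\})$ for $e\in E(H^c)$. $H-Y$ is the hypergraph induced on $V\setminus Y$ (keeping edges contained in $V\setminus Y$). Connectedness is defined via paths (alternating sequences of distinct vertices and distinct edges with consecutive vertices in the intermediate edge). A vertex-cut is a set $X$ with $H-X$ disconnected. $\kappa(H)$ is the minimum size of a vertex-cut if one exists, and $|V(H)|-1$ otherwise. $\overline{\kappa}(H)=\max\{\kappa(H'): H'\subseteq H\}$. An $r$-uniform hypergraph $H$ is vertex-$k$-maximal if $\overline{\kappa}(H)\leq k$ but $\overline{\kappa}(H+e)\geq k+1$ for every $e\in E(H^c)$. *)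

From Stdlib Require Import ClassicalEpsilon.
From mathcomp Require Import all_boot.
Set Implicit Arguments. Unset Strict Implicit. Unset Printing Implicit Defensive.

Definition pb (P : Prop) : bool :=
  if excluded_middle_informative P then true else false.

Section Hypergraphs.
Variable V : finType.

Record hg := Hg { hV : {set V}; hE : {set {set V}} }.

Definition wf_hg (H : hg) : Prop :=
  forall e, e \in hE H -> e != set0 /\ e \subset hV H.

Definition uniform (r : nat) (H : hg) : Prop :=
  forall e, e \in hE H -> #|e| = r.

(* A path from u to v: vertices u = x_0, x_1, ..., x_m = v (the list u :: vs),
   edges e_1, ..., e_m (the list es), all vertices distinct, all edges
   distinct, and x_{i-1}, x_i both lie in e_i. *)
Definition hpath (H : hg) (u v : V) : Prop :=
  exists (vs : seq V) (es : seq {set V}),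
    [/\ size es = size vs, last u vs = v, uniq (u :: vs) && uniq es,
        all (fun e => e \in hE H) es &
        forall i, i < size vs ->
          nth u (u :: vs) i \in nth set0 es i /\ nth u vs i \in nth set0 es i].

Definition connected (H : hg) : Prop :=
  forall u v, u \in hV H -> v \in hV H -> hpath H u v.

Definition hdel (H : hg) (Y : {set V}) : hg :=
  Hg (hV H :\: Y) [set e in hE H | e \subset hV H :\: Y].

Definition vertex_cut (H : hg) (X : {set V}) : Prop :=
  X \subset hV H /\ ~ connected (hdel H X).

Definition kappa (H : hg) : nat :=
  if [exists X, pb (vertex_cut H X)]
  then \big[minn/#|V|]_(X : {set V} | pb (vertex_cut H X)) #|X|
  else #|hV H| - 1.

Definition subhg (W : {set V}) (F : {set {set V}}) (H : hg) : bool :=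
  [&& W \subset hV H, F \subset hE H & [forall e in F, e \subset W]].

Definition kappa_bar (H : hg) : nat :=
  \max_(W : {set V}) \max_(F : {set {set V}} | subhg W F H) kappa (Hg W F).

Definition hadd (H : hg) (e : {set V}) : hg := Hg (hV H) (e |: hE H).

Definition compl_edge (r : nat) (H : hg) (e : {set V}) : Prop :=
  [/\ e \subset hV H, #|e| = r & e \notin hE H].

Definition vertex_k_maximal (k r : nat) (H : hg) : Prop :=
  kappa_bar H <= k /\
  forall e, compl_edge r H e -> k.+1 <= kappa_bar (hadd H e).

End Hypergraphs.

(* By induction on the number of vertices, an
   r-uniform hypergraph G with [kappa_bar G <= k < r] misses at least
   C(|V| - k, r) of the r-subsets of its vertex set.  When |V| >= k + r, a vertex
   cut X with |X| <= k splits V \ X into non-empty parts A and B that no edge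
   meets both.  The non-edges of G[A ∪ X], the non-edges of G[B ∪ X] and the
   r-subsets of A ∪ B meeting both A and B are then distinct non-edges of G
   (an r-set inside X is impossible since |X| < r); the induction hypothesis on
   both sides and C(a+b+x-k) + C(a) + C(b) <= C(a+b) + C(a+x-k) + C(b+x-k) for
   x <= k finish the count. *)

From mathcomp Require Import all_boot zify.
From Stdlib Require Import Classical ClassicalEpsilon.
Set Implicit Arguments. Unset Strict Implicit. Unset Printing Implicit Defensive.

Lemma pbP (P : Prop) : reflect P (pb P).
Proof. by rewrite /pb; case: excluded_middle_informative => h; constructor. Qed.

Lemma cardsU_disjoint (T : finType) (A B : {set T}) :
  [disjoint A & B] -> #|A :|: B| = #|A| + #|B|.
Proof. by move=> /disjoint_setI0 AB0; rewrite cardsU AB0 cards0 subn0. Qed.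

Section Paths.
Variable V : finType.
Implicit Types (G : hg V) (u v w z : V) (e : {set V}).

Definition is_hpath G u v (vs : seq V) (es : seq {set V}) : Prop :=
  [/\ size es = size vs, last u vs = v, uniq (u :: vs) && uniq es,
      all (fun e => e \in hE G) es &
      forall i, i < size vs ->
        nth u (u :: vs) i \in nth set0 es i /\ nth u vs i \in nth set0 es i].

Lemma hpathP G u v : hpath G u v <-> exists vs es, is_hpath G u v vs es.
Proof. by []. Qed.

Lemma last_take u (vs : seq V) i : i <= size vs -> last u (take i vs) = nth u (u :: vs) i.
Proof. by elim: vs u i => [|x s IH] u [|i] //= lti; rewrite IH // (set_nth_default u). Qed.

Lemma is_hpath_take G u v vs es i : is_hpath G u v vs es -> i <= size vs ->
  is_hpath G u (nth u (u :: vs) i) (take i vs) (take i es).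
Proof.
case=> sz _ /andP[uvs ues] Ees link lei; split.
- by rewrite !size_takel // sz.
- exact: last_take.
- by rewrite (take_uniq i.+1 uvs) take_uniq.
- by apply/allP => e /mem_take; apply: (allP Ees).
- move=> j; rewrite size_takel // => ltj.
  have := link j (leq_trans ltj lei); rewrite !nth_take //.
  by case: j ltj => //= j ltj; rewrite nth_take // ltnW.
Qed.

Lemma is_hpath_rcons G u v vs es z e : is_hpath G u v vs es ->
  z \notin u :: vs -> e \notin es -> e \in hE G -> v \in e -> z \in e ->
  is_hpath G u z (rcons vs z) (rcons es e).
Proof.
case=> sz lastv /andP[uvs ues] Ees link zvs ees eG ve ze; split.
- by rewrite !size_rcons sz.
- exact: last_rcons.
- by rewrite -rcons_cons !rcons_uniq zvs ees uvs ues.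
- by rewrite all_rcons eG.
- move=> j; rewrite size_rcons ltnS leq_eqVlt -rcons_cons !nth_rcons /= sz.
  case/orP=> [/eqP ->|ltj]; last by rewrite ltj ltnS ltnW //; apply: link.
  rewrite ltnn eqxx ltnSn.
  by rewrite -[size vs]/((size (u :: vs)).-1) nth_last /= lastv.
Qed.

(* A path reaching a vertex of an edge reaches every vertex of that edge: cut
   the path at the first visit of [z] or of [e] if there is one, else append [e]. *)
Lemma hpath_edge G u w z e :
  hpath G u w -> e \in hE G -> w \in e -> z \in e -> hpath G u z.
Proof.
move=> /hpathP[vs [es p]] eG we ze; have [sz lastw _ _ link] := p.
have [zvs|zvs] := boolP (z \in u :: vs).
  set i := index z (u :: vs); have lei : i <= size vs by rewrite -ltnS index_mem.
  rewrite -[z in hpath _ _ z](nth_index u zvs); apply/hpathP; exists (take i vs), (take i es).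
  exact: is_hpath_take p lei.
apply/hpathP; have [ees|ees] := boolP (e \in es); last first.
  by exists (rcons vs z), (rcons es e); apply: is_hpath_rcons p zvs ees eG we ze.
set i := index e es; have lti : i < size vs by rewrite -sz index_mem.
exists (rcons (take i vs) z), (rcons (take i es) e).
apply: is_hpath_rcons (is_hpath_take p (ltnW lti)) _ _ eG _ ze => //.
- by apply: contra zvs; exact: (@mem_take i.+1 _ (u :: vs)).
- by apply/negP => /index_ltn; rewrite ltnn.
- by have [+ _] := link i lti; rewrite nth_index.
Qed.

End Paths.

Lemma binS_sub m j s : 0 < s ->
  'C(m - j, s.+1) = 'C(m - j.+1, s.+1) + 'C(m - j.+1, s).
Proof.
move=> s_gt0; case def_mj: (m - j) => [|t].
  by rewrite (_ : m - j.+1 = 0); [rewrite !bin0n; case: s s_gt0 | lia].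
by rewrite (_ : m - j.+1 = t) ?binS //; lia.
Qed.

Lemma leq_binD p q s : 0 < s -> 'C(p, s) + 'C(q, s) <= 'C(p + q, s).
Proof.
case: s => // s _; elim: q => [|q IHq]; first by rewrite addn0 bin0n addn0.
by rewrite addnS !binS; have := leq_bin2l s (leq_addl p q); lia.
Qed.

(* Read over the integers: [y |-> 'C(a + b - y, s.+1) - 'C(a - y, s.+1) - 'C(b - y, s.+1)]
   is non-increasing, by Pascal's rule and [leq_binD]. *)
Lemma leq_binD_sub a b y s : 0 < s ->
  'C(a + b - y, s.+1) + 'C(a, s.+1) + 'C(b, s.+1) <=
  'C(a + b, s.+1) + 'C(a - y, s.+1) + 'C(b - y, s.+1).
Proof.
move=> s_gt0; elim: y => [|y]; first by rewrite !subn0.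
rewrite !(binS_sub _ y s_gt0).
have := leq_binD (a - y.+1) (b - y.+1) s_gt0.
have : 'C(a - y.+1 + (b - y.+1), s) <= 'C(a + b - y.+1, s) by apply: leq_bin2l; lia.
lia.
Qed.

Lemma leq_binD_cut a b x k r : x <= k -> 1 < r ->
  'C(a + b + x - k, r) + 'C(a, r) + 'C(b, r) <=
  'C(a + b, r) + 'C(a + x - k, r) + 'C(b + x - k, r).
Proof.
case: r => [|[|s]] // le_xk _.
have sub_kx c : c + x - k = c - (k - x) by lia.
by rewrite !sub_kx; apply: leq_binD_sub.
Qed.

Lemma subsetU_disjoint (T : finType) (S P Q e : {set T}) :
  [disjoint P & Q] -> e \subset S :|: P -> e \subset S :|: Q -> e \subset S.
Proof.
move=> dPQ eSP eSQ; apply/subsetP => z ze.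
move: (subsetP eSP z ze) (subsetP eSQ z ze); rewrite !inE.
by case: (z \in S) => //= zP; rewrite (disjointFr dPQ zP).
Qed.

Section Hypergraphs.
Variable V : finType.
Implicit Types (G : hg V) (S A B X e : {set V}).

Definition draws S (r : nat) : {set {set V}} := [set e : {set V} | e \subset S & #|e| == r].

Definition compl_edges (r : nat) G : {set {set V}} := draws (hV G) r :\: hE G.

Definition induced G S : hg V := Hg S [set e in hE G | e \subset S].

Definition crossing A B (r : nat) : {set {set V}} :=
  [set e in draws (A :|: B) r | ~~ (e \subset A) & ~~ (e \subset B)].

Lemma card_edges_compl r G : wf_hg G -> uniform r G ->
  #|hE G| + #|compl_edges r G| = 'C(#|hV G|, r).
Proof.
move=> wfG uG; rewrite -cards_draws -/(draws _ r).
have EG : hE G \subset draws (hV G) r.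
  by apply/subsetP => e eG; rewrite inE (wfG e eG).2 (uG e eG) eqxx.
by rewrite -(cardsID (hE G) (draws _ r)) (setIidPr EG) addnC.
Qed.

Lemma card_draws_setU A B r :
  'C(#|A :|: B|, r) <= 'C(#|A|, r) + 'C(#|B|, r) + #|crossing A B r|.
Proof.
rewrite -!cards_draws -!/(draws _ r).
apply: (@leq_trans #|draws A r :|: draws B r :|: crossing A B r|); last first.
  by rewrite (leq_trans (leq_card_setU _ _)) // leq_add2r leq_card_setU.
apply/subset_leq_card/subsetP => e eAB; rewrite !inE.
by move: eAB; rewrite !inE => /andP[-> ->]; case: (e \subset A); case: (e \subset B).
Qed.

Lemma wf_induced G S : wf_hg G -> wf_hg (induced G S).
Proof. by move=> wfG e; rewrite inE => /andP[/wfG[]]. Qed.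

Lemma uniform_induced r G S : uniform r G -> uniform r (induced G S).
Proof. by move=> uG e; rewrite inE => /andP[/uG]. Qed.

Lemma kappa_bar_mono G1 G2 : hV G1 \subset hV G2 -> hE G1 \subset hE G2 ->
  kappa_bar G1 <= kappa_bar G2.
Proof.
move=> VG12 EG12; apply/bigmax_leqP => W _; apply/bigmax_leqP => F /and3P[WG FG FW].
apply: leq_trans (leq_bigmax W).
apply: (@leq_bigmax_cond _ (fun F => subhg W F G2) (fun F => kappa (Hg W F))).
by rewrite /subhg (subset_trans WG VG12) (subset_trans FG EG12).
Qed.

Lemma kappa_bar_induced G S : S \subset hV G -> kappa_bar (induced G S) <= kappa_bar G.
Proof. by move=> SG; apply: kappa_bar_mono => //; apply/subsetP => e; rewrite inE => /andP[]. Qed.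

Lemma kappa_le_kappa_bar G : wf_hg G -> kappa G <= kappa_bar G.
Proof.
case: G => W F wfG; apply: leq_trans (leq_bigmax W).
apply: (@leq_bigmax_cond _ (fun E => subhg W E (Hg W F)) (fun E => kappa (Hg W E))).
by rewrite /subhg /= !subxx; apply/forallP => e; apply/implyP => /wfG[].
Qed.

Lemma small_vertex_cut k G : k.+1 < #|hV G| -> kappa G <= k ->
  exists2 X, vertex_cut G X & #|X| <= k.
Proof.
move=> ltkG; rewrite /kappa; case: ifP => [_|_]; last by lia.
elim/big_ind: _ => [|m1 m2 IH1 IH2|X /pbP cutX leXk].
- by have := max_card (hV G); lia.
- by rewrite geq_min => /orP[/IH1|/IH2].
- by exists X.
Qed.

Lemma vertex_cut_split G X : vertex_cut G X ->
  exists A B, [/\ A != set0, B != set0, [disjoint A & B], A :|: B = hV G :\: X &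
    forall e, e \in hE G -> e \subset A :|: B -> (e \subset A) || (e \subset B)].
Proof.
case=> _ disconnected; set W := hV G :\: X.
have [u [v [uW vW no_uv]]] : exists u v, [/\ u \in W, v \in W & ~ hpath (hdel G X) u v].
  apply: NNPP => all_paths; apply: disconnected => u v uW vW.
  by apply: NNPP => no_uv; apply: all_paths; exists u, v.
set R := [set w | pb (hpath (hdel G X) u w)].
exists (W :&: R), (W :\: R); split; last first.
- move=> e eG; rewrite setID => eW.
  have eGX : e \in hE (hdel G X) by rewrite inE eG eW.
  have [/exists_inP[w we wR]|/exists_inPn eNR] := boolP [exists w in e, w \in R]; last first.
    apply/orP; right; apply/subsetP => z ze.
    by rewrite inE (subsetP eW z ze) eNR.
  apply/orP; left; apply/subsetP => z ze; rewrite inE (subsetP eW z ze) inE.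
  by move: wR; rewrite inE => /pbP reach_w; apply/pbP; apply: hpath_edge reach_w eGX we ze.
- exact: setID.
- by rewrite disjoint_subset; apply/subsetP => w /setIP[_ wR]; rewrite !inE; move: wR; rewrite inE => ->.
- by apply/set0Pn; exists v; rewrite in_setD vW andbT inE; apply/negP => /pbP.
- by apply/set0Pn; exists u; rewrite in_setI uW inE; apply/pbP; exists [::], [::].
Qed.

Lemma compl_edges_induced r G S : S \subset hV G ->
  compl_edges r (induced G S) \subset compl_edges r G.
Proof.
move=> SG; apply/subsetP => e; rewrite !inE /= => /and3P[eNGS eS ->].
by rewrite eS andbT in eNGS; rewrite eNGS (subset_trans eS SG).
Qed.

Section Separation.
Variables (r : nat) (G : hg V) (A B X : {set V}).
Hypotheses (ABXG : A :|: B :|: X \subset hV G) (dAB : [disjoint A & B])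
  (dAX : [disjoint A & X]) (dBX : [disjoint B & X]) (ltXr : #|X| < r)
  (noncrossing : forall e, e \in hE G -> e \subset A :|: B -> (e \subset A) || (e \subset B)).

Lemma crossing_compl_edges : crossing A B r \subset compl_edges r G.
Proof.
apply/subsetP => e; rewrite !inE => /and3P[/andP[eAB ->] eNA eNB].
rewrite (subset_trans eAB (subset_trans (subsetUl _ X) ABXG)) !andbT.
apply/negP => eG; have := noncrossing eG eAB.
by rewrite (negbTE eNA) (negbTE eNB).
Qed.

Lemma card_compl_edges_separation :
  #|compl_edges r (induced G (A :|: X))| + #|compl_edges r (induced G (B :|: X))|
    + #|crossing A B r| <= #|compl_edges r G|.
Proof.
set P := compl_edges r (induced G (A :|: X)); set Q := compl_edges r (induced G (B :|: X)).
have dPQ : [disjoint P & Q].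
  rewrite disjoint_subset; apply/subsetP => e; rewrite !inE => /and3P[_ eAX /eqP er].
  apply/negP => /and3P[_ eBX _]; rewrite setUC in eAX; rewrite setUC in eBX.
  have := subset_leq_card (subsetU_disjoint dAB eAX eBX).
  by rewrite er leqNgt ltXr.
have dPQC : [disjoint P :|: Q & crossing A B r].
  rewrite disjoint_sym disjoint_subset; apply/subsetP => e.
  rewrite !inE => /and3P[/andP[eAB _] eNA eNB]; apply/negP => /orP[] /and3P[_ /= eSX _].
  - by rewrite (subsetU_disjoint dBX eAB eSX) in eNA.
  - by rewrite setUC in eAB; rewrite (subsetU_disjoint dAX eAB eSX) in eNB.
rewrite -cardsU_disjoint // -cardsU_disjoint //; apply: subset_leq_card.
rewrite !subUset crossing_compl_edges andbT.
by rewrite !compl_edges_induced // (subset_trans _ ABXG) // setUSS ?subsetUl ?subsetUr.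
Qed.

End Separation.

Lemma card_compl_edges_ge k r G : k < r -> 1 < r -> wf_hg G -> uniform r G ->
  kappa_bar G <= k -> 'C(#|hV G| - k, r) <= #|compl_edges r G|.
Proof.
move=> ltkr lt1r; have [m] := ubnP #|hV G|; elim: m G => // m IH G ltGm wfG uG kbG.
have [small|big] := ltnP #|hV G| (k + r); first by rewrite bin_small //; lia.
have [|X cutX leXk] := small_vertex_cut _ (leq_trans (kappa_le_kappa_bar wfG) kbG).
  by lia.
have [A [B [A0 B0 dAB defAB noncrossing]]] := vertex_cut_split cutX.
have /andP[AG dAX] : (A \subset hV G) && [disjoint A & X] by rewrite -subsetD -defAB subsetUl.
have /andP[BG dBX] : (B \subset hV G) && [disjoint B & X] by rewrite -subsetD -defAB subsetUr.
have XG : X \subset hV G := cutX.1.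
have cardG : #|hV G| = #|A| + #|B| + #|X|.
  by rewrite -cardsU_disjoint // defAB -{1}(cardsID X (hV G)) (setIidPr XG) addnC.
have IHS S : S \subset hV G -> #|S| < #|hV G| ->
    'C(#|S| - k, r) <= #|compl_edges r (induced G S)|.
  move=> SG ltSG; apply: IH; first by rewrite /=; lia.
  - exact: wf_induced.
  - exact: uniform_induced.
  - exact: leq_trans (kappa_bar_induced SG) kbG.
have ABXG : A :|: B :|: X \subset hV G by rewrite !subUset AG BG XG.
have ltXr := leq_ltn_trans leXk ltkr.
have IHA := IHS (A :|: X); have IHB := IHS (B :|: X).
rewrite !cardsU_disjoint // !subUset ?AG ?BG XG in IHA IHB.
have := card_compl_edges_separation ABXG dAB dAX dBX ltXr noncrossing.
have := card_draws_setU A B r; rewrite cardsU_disjoint //.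
have := leq_binD_cut #|A| #|B| leXk lt1r.
move: B0 A0 IHA IHB; rewrite -!card_gt0 cardG; lia.
Qed.

End Hypergraphs.

Theorem theorem4p2 (V : finType) (n k r : nat) (H : hg V) :
  2 <= k -> 2 <= r -> 2 * k <= n -> k < r ->
  wf_hg H -> uniform r H -> #|hV H| = n ->
  vertex_k_maximal k r H ->
  #|hE H| <= 'C(n, r) - 'C(n - k, r).
Proof.
move=> _ lt1r _ ltkr wfH uH <- [kbH _].
have := card_edges_compl wfH uH; have := card_compl_edges_ge ltkr lt1r wfH uH kbH.
lia.
Qed.
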